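(* Let $(Q,P)$ be a weakly quasi-lattice ordered group and let $\Lambda$ be a $P$-graph with $\mathrm{FA}(\Lambda)\neq\emptyset$. Under the homeomorphism $z\mapsto(z,e,z)$ from $\mathcal{X}(\Lambda)$ onto the unit space of the path groupoid $\mathcal{G}(\Lambda)$, the boundary-path space $\partial\mathcal{X}(\Lambda)$ is identified with a closed invariant subset of the unit space of $\mathcal{G}(\Lambda)$.
   Context: $(Q,P)$ weakly quasi-lattice ordered: $Q$ a discrete group, $P\subseteq Q$ a subsemigroup containing the identity $e$ with $P\cap P^{-1}=\{e\}$, and, with $p\le r$ meaning $pq=r$ for some $q\in P$, any two elements of $P$ with a common upper bound have a least common upper bound. A $P$-graph is a countable small category $\Lambda$ (range/source $r,s$) with a functor $d:\Lambda\to P$ with unique factorisation (if $d(\lambda)=pq$ there are unique $\mu,\nu$ with $\lambda=\mu\nu$, $d(\mu)=p$, $d(\nu)=q$). Write $\Lambda^m=d^{-1}(m)$, $\lambda\Lambda=\{\lambda\mu: s(\lambda)=r(\mu)\}$, $\mu\preceq\lambda$ iff $\lambda\in\mu\Lambda$. $\mathrm{FA}(\Lambda)$ is the set of $\lambda$ such that for all $\mu\in\lambda\Lambda,\nu\in\Lambda$ there is finite $J\subseteq\Lambda$ with $\mu\Lambda\cap\nu\Lambda=\bigcup_{\kappa\in J}\kappa\Lambda$. A filter is a nonempty hereditary and directed subset of $\Lambda$ (w.r.t. $\preceq$); $\mathcal{F}(\Lambda)$ the filters, $\mathcal{U}(\Lambda)$ the maximal filters. $\mathcal{P}(\Lambda)$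 has the product topology from $\{0,1\}^\Lambda$; subsets have the subspace topology. Path space $\mathcal{X}(\Lambda)=\{x\in\mathcal{F}(\Lambda): x\cap\mathrm{FA}(\Lambda)\neq\emptyset\}$; boundary-path space $\partial\mathcal{X}(\Lambda)$ = closure of $\mathcal{U}(\Lambda)\cap\mathcal{X}(\Lambda)$ in $\mathcal{X}(\Lambda)$. For $x\in\mathcal{X}(\Lambda)$, $m\in P$ with $x\cap\Lambda^m\neq\emptyset$ (write $x\in\mathrm{dom}(m)$), $x(0,m)$ is the unique element of $x\cap\Lambda^m$ and $x\cdot m=\{\mu: x(0,m)\mu\in x\}$. $\mathcal{G}(\Lambda)$ is the set of $(x,q,y)\in\mathcal{X}(\Lambda)\times Q\times\mathcal{X}(\Lambda)$ with $q=mn^{-1}$, $x\in\mathrm{dom}(m)$, $y\in\mathrm{dom}(n)$, $x\cdot m=y\cdot n$ for some $m,n\in P$; product $(x,q,y)(y,r,z)=(x,qr,z)$, inverse $(y,q^{-1},x)$, so range $r(x,q,y)=(x,e,x)$ and source $s(x,q,y)=(y,e,y)$; topology with basis $\{(x,mn^{-1},y)\in\mathcal{G}(\Lambda): x\in U,y\in V,x\cdot m=y\cdot n\}$, $m,n\in P$, $U,V$ open. A subset $U$ of the unit space is invariant if $r(s^{-1}(U))\subseteq U$. *)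

From Stdlib Require Import List.
Set Implicit Arguments.

Record WQLOG := {
  grp :> Type;
  gmul : grp -> grp -> grp;
  gone : grp;
  ginv : grp -> grp;
  gmul_assoc : forall a b c, gmul a (gmul b c) = gmul (gmul a b) c;
  gmul_1l : forall a, gmul gone a = a;
  gmul_1r : forall a, gmul a gone = a;
  gmul_Vl : forall a, gmul (ginv a) a = gone;
  gmul_Vr : forall a, gmul a (ginv a) = gone;
  Pos : grp -> Prop;
  Pos_one : Pos gone;
  Pos_mul : forall p q, Pos p -> Pos q -> Pos (gmul p q);
  Pos_cap_inv : forall p, Pos p -> Pos (ginv p) -> p = gone;
  Pos_wqlo : forall p q, Pos p -> Pos q ->
    (exists r, Pos r /\ (exists a, Pos a /\ gmul p a = r)
                     /\ (exists b, Pos b /\ gmul q b = r)) ->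
    exists l, Pos l /\ (exists a, Pos a /\ gmul p a = l)
                    /\ (exists b, Pos b /\ gmul q b = l)
              /\ forall r, Pos r -> (exists a, Pos a /\ gmul p a = r) ->
                           (exists b, Pos b /\ gmul q b = r) ->
                           exists c, Pos c /\ gmul l c = r
}.

(** Composition [comp] is total on the
    type of morphisms but only meaningful on composable pairs
    ([src mu = rng nu]); all axioms only concern composable pairs. *)
Record PGraph (QP : WQLOG) := {
  Obj : Type;
  Mor : Type;
  rng : Mor -> Obj;
  src : Mor -> Obj;
  idm : Obj -> Mor;
  comp : Mor -> Mor -> Mor;
  rng_id : forall v, rng (idm v) = v;
  src_id : forall v, src (idm v) = v;
  rng_comp : forall mu nu, src mu = rng nu -> rng (comp mu nu) = rng mu;
  src_comp : forall mu nu, src mu = rng nu -> src (comp mu nu) = src nu;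
  comp_id_l : forall mu, comp (idm (rng mu)) mu = mu;
  comp_id_r : forall mu, comp mu (idm (src mu)) = mu;
  comp_assoc : forall a b c, src a = rng b -> src b = rng c ->
    comp a (comp b c) = comp (comp a b) c;
  Obj_countable : exists f : Obj -> nat, forall u v, f u = f v -> u = v;
  Mor_countable : exists f : Mor -> nat, forall u v, f u = f v -> u = v;
  deg : Mor -> QP;
  deg_pos : forall mu, Pos QP (deg mu);
  deg_id : forall v, deg (idm v) = gone QP;
  deg_comp : forall mu nu, src mu = rng nu ->
    deg (comp mu nu) = gmul QP (deg mu) (deg nu);
  unique_fact : forall lam p q, Pos QP p -> Pos QP q ->
    deg lam = gmul QP p q ->
    exists mu nu, (src mu = rng nu /\ lam = comp mu nu /\ deg mu = p /\ deg nu = q)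
      /\ forall mu' nu', src mu' = rng nu' -> lam = comp mu' nu' ->
           deg mu' = p -> deg nu' = q -> mu' = mu /\ nu' = nu
}.

Section PathGroupoid.
Variable QP : WQLOG.
Variable L : PGraph QP.

Definition Mset := Mor L -> Prop.

Definition prec (mu lam : Mor L) : Prop :=
  exists nu, src L mu = rng L nu /\ lam = comp L mu nu.

Definition FA (lam : Mor L) : Prop :=
  forall mu nu, prec lam mu ->
    exists J : list (Mor L), forall tau,
      (prec mu tau /\ prec nu tau) <-> (exists kap, In kap J /\ prec kap tau).

Definition is_filter (x : Mset) : Prop :=
  (exists lam, x lam)
  /\ (forall lam mu, x lam -> prec mu lam -> x mu)
  /\ (forall mu nu, x mu -> x nu -> exists lam, x lam /\ prec mu lam /\ prec nu lam).

Definition is_max_filter (x : Mset) : Prop :=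
  is_filter x /\ forall y, is_filter y -> (forall lam, x lam -> y lam) ->
                          forall lam, y lam -> x lam.

(** product topology on P(Λ) = {0,1}^Λ: basic open cylinders *)
Definition cylinder (F G : list (Mor L)) (x : Mset) : Prop :=
  (forall lam, In lam F -> x lam) /\ (forall lam, In lam G -> ~ x lam).

Definition open_P (O : Mset -> Prop) : Prop :=
  forall x, O x -> exists F G, cylinder F G x /\ forall y, cylinder F G y -> O y.

Definition pathX (x : Mset) : Prop := is_filter x /\ exists lam, x lam /\ FA lam.

Definition open_X (U : Mset -> Prop) : Prop :=
  exists O, open_P O /\ forall x, U x <-> (O x /\ pathX x).

(** boundary-path space: closure in X(Λ) of U(Λ) ∩ X(Λ) *)
Definition bdryX (x : Mset) : Prop :=
  pathX x /\
  forall O, open_P O -> O x -> exists y, O y /\ is_max_filter y /\ pathX y.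

Definition in_dom (x : Mset) (m : QP) : Prop := exists lam, x lam /\ deg L lam = m.

Definition shift (x : Mset) (m : QP) : Mset :=
  fun mu => exists lam, x lam /\ deg L lam = m /\ src L lam = rng L mu
                        /\ x (comp L lam mu).

Definition same_set (a b : Mset) : Prop := forall mu, a mu <-> b mu.

Definition Triple := (Mset * grp QP * Mset)%type.

Definition inG (g : Triple) : Prop :=
  let '(x, q, y) := g in
  pathX x /\ pathX y /\
  exists m n, Pos QP m /\ Pos QP n /\ q = gmul QP m (ginv QP n)
    /\ in_dom x m /\ in_dom y n /\ same_set (shift x m) (shift y n).

Definition g_rng (g : Triple) : Triple := let '(x, _, _) := g in (x, gone QP, x).
Definition g_src (g : Triple) : Triple := let '(_, _, y) := g in (y, gone QP, y).

Definition basicG (m n : QP) (U V : Mset -> Prop) (g : Triple) : Prop :=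
  let '(x, q, y) := g in
  inG g /\ q = gmul QP m (ginv QP n) /\ U x /\ V y
  /\ in_dom x m /\ in_dom y n /\ same_set (shift x m) (shift y n).

Definition open_G (W : Triple -> Prop) : Prop :=
  (forall g, W g -> inG g) /\
  forall g, W g -> exists m n U V, Pos QP m /\ Pos QP n /\ open_X U /\ open_X V
    /\ basicG m n U V g /\ forall h, basicG m n U V h -> W h.

Definition unitG (g : Triple) : Prop := exists x, pathX x /\ g = (x, gone QP, x).

Definition bdry_units (g : Triple) : Prop := exists z, bdryX z /\ g = (z, gone QP, z).

Definition closed_in_units (A : Triple -> Prop) : Prop :=
  exists W, open_G W /\ forall g, unitG g -> (~ A g <-> W g).

Definition invariant (A : Triple -> Prop) : Prop :=
  forall g, inG g -> A (g_src g) -> A (g_rng g).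

End PathGroupoid.

From Stdlib Require Import List Classical.
Import ListNotations.
Set Implicit Arguments.
Unset Strict Implicit.

(* Closedness: a unit (x, e, x) outside the boundary has an open neighbourhood O
   of x containing no maximal path filter, and the basic open set of G(Λ) given
   by O with m = n = e contains (x, e, x) and no boundary unit.

   Invariance: if (x, q, y) ∈ G(Λ), then b := x(0,m) and a := y(0,n) have the
   same source and x(bμ) <-> y(aμ) for all μ.  Transport along aμ |-> bμ maps
   filters containing a to filters containing b and preserves maximality.  A
   cylinder neighbourhood of x may be assumed to be controlled by some b' ⪰ b in
   x ∩ FA(Λ); finite exhaustion then turns each excluded path into finitely many
   excluded paths on the y side.  This gives a cylinder neighbourhood of y, and
   the transport of any maximal path filter in it lies in the neighbourhood of
   x. *)

Lemma list_choice (A B : Type) (R : A -> B -> Prop) (l : list A) :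
  (forall a, In a l -> exists b, R a b) ->
  exists lb, (forall b, In b lb -> exists a, In a l /\ R a b)
          /\ (forall a, In a l -> exists b, In b lb /\ R a b).
Proof.
  induction l as [|a l IH]; intros H.
  - exists []. split; intros _ [].
  - destruct (H a (in_eq a l)) as [b Hb].
    destruct IH as [lb [H1 H2]]; [intros c Hc; apply H, in_cons, Hc|].
    exists (b :: lb). split.
    + intros c [<-|Hc]; [exists a; split; [apply in_eq|exact Hb]|].
      destruct (H1 c Hc) as [d [Hd Rd]]. exists d. split; [apply in_cons|]; assumption.
    + intros c [<-|Hc]; [exists b; split; [apply in_eq|exact Hb]|].
      destruct (H2 c Hc) as [d [Hd Rd]]. exists d. split; [apply in_cons|]; assumption.
Qed.

Lemma gmul_cancel_l {G : WQLOG} (a b c : G) : gmul G a b = gmul G a c -> b = c.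
Proof.
  intros E. rewrite <- (gmul_1l G b), <- (gmul_1l G c), <- (gmul_Vl G a),
    <- !gmul_assoc, E. reflexivity.
Qed.

Section PathSpace.
Variable QP : WQLOG.
Variable L : PGraph QP.
Local Notation M := (Mor L).
Local Notation cp := (comp L).
Local Notation src := (src L).
Local Notation rng := (rng L).
Local Notation prec := (prec L).
Local Notation e := (gone QP).

Lemma comp_cancel_l (a u v : M) :
  src a = rng u -> src a = rng v -> cp a u = cp a v -> u = v.
Proof.
  intros Hu Hv E.
  assert (Hd : deg L u = deg L v).
  { apply (gmul_cancel_l (a := deg L a)).
    rewrite <- (deg_comp L a u Hu), <- (deg_comp L a v Hv), E. reflexivity. }
  destruct (unique_fact L (cp a u) (deg L a) (deg L u) (deg_pos L a) (deg_pos L u)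
     (deg_comp L a u Hu)) as [mu [nu [_ Huniq]]].
  destruct (Huniq a u Hu eq_refl eq_refl eq_refl) as [_ E1].
  destruct (Huniq a v Hv E eq_refl (eq_sym Hd)) as [_ E2].
  congruence.
Qed.

Lemma prec_refl (a : M) : prec a a.
Proof. exists (idm L (src a)). rewrite rng_id, comp_id_r. auto. Qed.

Lemma prec_idm (a : M) : prec (idm L (rng a)) a.
Proof. exists a. rewrite src_id, comp_id_l. auto. Qed.

Lemma prec_trans (a b c : M) : prec a b -> prec b c -> prec a c.
Proof.
  intros [n1 [H1 ->]] [n2 [H2 ->]]. rewrite (src_comp L _ _ H1) in H2.
  exists (cp n1 n2). rewrite (rng_comp L _ _ H2), (comp_assoc L _ _ _ H1 H2). auto.
Qed.

Lemma prec_comp_l (a u v : M) : src a = rng u -> prec u v -> prec (cp a u) (cp a v).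
Proof.
  intros H [s [Hs ->]]. exists s.
  rewrite (src_comp L _ _ H), (comp_assoc L _ _ _ H Hs). auto.
Qed.

Lemma prec_cancel_l (a u v : M) :
  src a = rng u -> src a = rng v -> prec (cp a u) (cp a v) -> prec u v.
Proof.
  intros Hu Hv [s [Hs E]]. rewrite (src_comp L _ _ Hu) in Hs.
  rewrite <- (comp_assoc L _ _ _ Hu Hs) in E.
  exists s. split; [exact Hs|].
  apply (comp_cancel_l (a := a)); [exact Hv| |exact E]. rewrite (rng_comp L _ _ Hs). exact Hu.
Qed.

Lemma FA_prec (a b : M) : FA L a -> prec a b -> FA L b.
Proof. intros Ha Hab mu nu Hb. apply Ha. exact (prec_trans Hab Hb). Qed.

Lemma filter_hered (x : Mset L) (a b : M) : is_filter x -> x a -> prec b a -> x b.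
Proof. intros [_ [H _]]. apply H. Qed.

Lemma filter_upper_bound (x : Mset L) (l : list M) (a : M) :
  is_filter x -> (forall f, In f l -> x f) -> x a ->
  exists t, x t /\ prec a t /\ forall f, In f l -> prec f t.
Proof.
  intros Fx. induction l as [|f l IH]; intros Hl Ha.
  - exists a. split; [exact Ha|]. split; [apply prec_refl|]. intros f [].
  - destruct IH as [t [xt [Hat Ht]]]; [intros g Hg; apply Hl, in_cons, Hg|exact Ha|].
    destruct Fx as [_ [_ Hdir]].
    destruct (Hdir f t (Hl f (in_eq f l)) xt) as [r [xr [Hfr Htr]]].
    exists r. split; [exact xr|]. split; [exact (prec_trans Hat Htr)|].
    intros g [<-|Hg]; [exact Hfr|exact (prec_trans (Ht g Hg) Htr)].
Qed.

Lemma filter_deg_inj (x : Mset L) (a b : M) :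
  is_filter x -> x a -> x b -> deg L a = deg L b -> a = b.
Proof.
  intros [_ [_ Hdir]] xa xb Hd.
  destruct (Hdir a b xa xb) as [t [_ [[n1 [H1 E1]] [n2 [H2 E2]]]]].
  assert (Hn : deg L n2 = deg L n1).
  { apply (gmul_cancel_l (a := deg L a)).
    rewrite <- (deg_comp L a n1 H1), Hd at 1. rewrite <- (deg_comp L b n2 H2). congruence. }
  destruct (unique_fact L t (deg L a) (deg L n1) (deg_pos L a) (deg_pos L n1)
     (eq_trans (f_equal (deg L) E1) (deg_comp L a n1 H1))) as [mu [nu [_ Hu]]].
  destruct (Hu a n1 H1 E1 eq_refl eq_refl) as [-> _].
  destruct (Hu b n2 H2 E2 (eq_sym Hd) Hn) as [-> _].
  reflexivity.
Qed.

Definition transport (a b : M) (w : Mset L) : Mset L :=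
  fun nu => exists mu, src a = rng mu /\ w (cp a mu) /\ prec nu (cp b mu).

Lemma transport_target (a b : M) (w : Mset L) :
  src a = src b -> w a -> transport a b w b.
Proof.
  intros Hab Ha. exists (idm L (src a)).
  rewrite rng_id, comp_id_r, Hab, comp_id_r. auto using prec_refl.
Qed.

Lemma transport_mono (a b : M) (w w' : Mset L) (nu : M) :
  (forall l, w l -> w' l) -> transport a b w nu -> transport a b w' nu.
Proof. intros Hw [mu [H1 [H2 H3]]]. exists mu. auto. Qed.

Lemma transport_roundtrip (a b : M) (w : Mset L) (nu : M) :
  is_filter w -> w a -> src a = src b -> w nu -> transport b a (transport a b w) nu.
Proof.
  intros [_ [_ Hdir]] Ha Hab Hnu.
  destruct (Hdir nu a Hnu Ha) as [r [Hr [Hnur [mu [Hmu ->]]]]].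
  exists mu. split; [congruence|]. split; [|exact Hnur].
  exists mu. auto using prec_refl.
Qed.

Lemma transport_filter (a b : M) (w : Mset L) :
  is_filter w -> w a -> src a = src b -> is_filter (transport a b w).
Proof.
  intros Fw Ha Hab. split; [|split].
  - exists b. apply transport_target; assumption.
  - intros l m [mu [H1 [H2 H3]]] Hml. exists mu. eauto using prec_trans.
  - intros n1 n2 [m1 [A1 [B1 C1]]] [m2 [A2 [B2 C2]]].
    destruct Fw as [_ [_ Hdir]].
    destruct (Hdir _ _ B1 B2) as [r [Hr [[s1 [S1 E1]] [s2 [S2 E2]]]]].
    rewrite (src_comp L _ _ A1) in S1. rewrite (src_comp L _ _ A2) in S2.
    rewrite <- (comp_assoc L _ _ _ A1 S1) in E1.
    rewrite <- (comp_assoc L _ _ _ A2 S2) in E2.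
    assert (Em : cp m1 s1 = cp m2 s2).
    { apply (comp_cancel_l (a := a)); [| |congruence];
        rewrite rng_comp; assumption. }
    assert (Hb1 : src b = rng m1) by congruence.
    assert (Hb2 : src b = rng m2) by congruence.
    exists (cp b (cp m1 s1)). split; [|split].
    + exists (cp m1 s1). rewrite (rng_comp L _ _ S1), <- E1. auto using prec_refl.
    + exact (prec_trans C1 (prec_comp_l Hb1 (ex_intro _ s1 (conj S1 eq_refl)))).
    + rewrite Em. exact (prec_trans C2 (prec_comp_l Hb2 (ex_intro _ s2 (conj S2 eq_refl)))).
Qed.

Lemma transport_max_filter (a b : M) (y : Mset L) :
  is_max_filter y -> y a -> src a = src b -> is_max_filter (transport a b y).
Proof.
  intros [Fy Hmax] Ha Hab. split; [exact (transport_filter Fy Ha Hab)|].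
  intros w Fw Hsub nu Hnu.
  assert (Hb : w b) by (apply Hsub, transport_target; assumption).
  assert (Hy : forall l, y l -> transport b a w l).
  { intros l Hl. apply (transport_mono Hsub), transport_roundtrip; assumption. }
  assert (Hyw : forall l, transport b a w l -> y l).
  { apply (Hmax _ (transport_filter Fw Hb (eq_sym Hab)) Hy). }
  apply (transport_mono Hyw), transport_roundtrip; auto.
Qed.

Definition related (x y : Mset L) (b a : M) : Prop :=
  src b = src a /\ x b /\
  forall mu, src b = rng mu -> (x (cp b mu) <-> y (cp a mu)).

Lemma related_in_r (x y : Mset L) (b a : M) : related x y b a -> y a.
Proof.
  intros [Hba [Hb HR]]. rewrite <- (comp_id_r L a), <- Hba.
  apply HR; [rewrite rng_id; reflexivity|]. rewrite comp_id_r. exact Hb.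
Qed.

Lemma related_extend (x y : Mset L) (b a b' : M) :
  related x y b a -> x b' -> prec b b' -> exists a', related x y b' a'.
Proof.
  intros [Hba [Hb HR]] Hb' [m0 [Hm0 ->]].
  assert (Ham0 : src a = rng m0) by congruence.
  exists (cp a m0). split; [|split; [exact Hb'|]].
  - rewrite !src_comp; auto.
  - intros mu Hmu. rewrite (src_comp L _ _ Hm0) in Hmu.
    rewrite <- (comp_assoc L _ _ _ Hm0 Hmu), <- (comp_assoc L _ _ _ Ham0 Hmu).
    apply HR. rewrite (rng_comp L _ _ Hmu). exact Hm0.
Qed.

Lemma related_avoid_one (x y : Mset L) (b a k : M) :
  related x y b a -> prec b k -> ~ x k ->
  exists h, ~ y h /\
    forall mu, src b = rng mu -> prec k (cp b mu) -> prec h (cp a mu).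
Proof.
  intros [Hba [_ HR]] [mk [Hmk ->]] Hk. exists (cp a mk). split.
  - intros Hy. apply Hk, HR; assumption.
  - intros mu Hmu Hp. apply prec_comp_l; [congruence|].
    exact (prec_cancel_l Hmk Hmu Hp).
Qed.

(* FA(b) writes bΛ ∩ gΛ as a finite union of kΛ; each such k gives one excluded
   path on the y side. *)
Lemma related_avoid (x y : Mset L) (b a g : M) :
  is_filter x -> related x y b a -> FA L b -> ~ x g ->
  exists H, (forall h, In h H -> ~ y h) /\
    forall mu, src b = rng mu -> prec g (cp b mu) ->
      exists h, In h H /\ prec h (cp a mu).
Proof.
  intros Fx Rxy FAb Hg.
  destruct (FAb b g (prec_refl b)) as [J HJ].
  assert (HJk : forall k, In k J -> prec b k /\ prec g k).
  { intros k Hk. apply HJ. exists k. auto using prec_refl. }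
  destruct (list_choice (R := fun k h => ~ y h /\ forall mu, src b = rng mu ->
              prec k (cp b mu) -> prec h (cp a mu)) (l := J)) as [H [HH1 HH2]].
  { intros k Hk. destruct (HJk k Hk) as [Hbk Hgk].
    apply (related_avoid_one Rxy Hbk). intros Hxk. exact (Hg (filter_hered Fx Hxk Hgk)). }
  exists H. split.
  - intros h Hh. destruct (HH1 h Hh) as [k [_ [Hyh _]]]. exact Hyh.
  - intros mu Hmu Hp.
    destruct (proj1 (HJ (cp b mu))) as [k [Hk Hkp]].
    { split; [exists mu; auto|exact Hp]. }
    destruct (HH2 k Hk) as [h [Hh [_ Hha]]]. exists h. auto.
Qed.

Lemma related_avoid_all (x y : Mset L) (b a : M) (G : list M) :
  is_filter x -> related x y b a -> FA L b -> (forall g, In g G -> ~ x g) ->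
  exists H, (forall h, In h H -> ~ y h) /\
    forall g mu, In g G -> src b = rng mu -> prec g (cp b mu) ->
      exists h, In h H /\ prec h (cp a mu).
Proof.
  intros Fx Rxy FAb HG.
  destruct (list_choice (R := fun g H => (forall h, In h H -> ~ y h) /\
              forall mu, src b = rng mu -> prec g (cp b mu) ->
                exists h, In h H /\ prec h (cp a mu)) (l := G)) as [HH [HH1 HH2]].
  { intros g Hg. exact (related_avoid Fx Rxy FAb (HG g Hg)). }
  exists (concat HH). split.
  - intros h Hh. apply in_concat in Hh. destruct Hh as [H [HinHH HinH]].
    destruct (HH1 H HinHH) as [g [_ [HyH _]]]. exact (HyH h HinH).
  - intros g mu Hg Hmu Hp. destruct (HH2 g Hg) as [H [HinHH [_ HcH]]].
    destruct (HcH mu Hmu Hp) as [h [Hh Hha]].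
    exists h. split; [apply in_concat; eauto|exact Hha].
Qed.

Lemma cylinder_open (F G : list M) : open_P (cylinder F G).
Proof. intros z Hz. exists F, G. auto. Qed.

Lemma bdryX_of_related (x y : Mset L) (b a : M) :
  pathX x -> bdryX y -> related x y b a -> bdryX x.
Proof.
  intros Px By Rxy. split; [exact Px|].
  intros O HO Ox.
  destruct (HO x Ox) as [F [G [[HF HG] HFG]]].
  destruct Px as [Fx [be [xbe FAbe]]].
  destruct (filter_upper_bound (l := be :: F) Fx (a := b))
    as [b' [xb' [Hbb' Hub]]].
  { intros f [<-|Hf]; [exact xbe|exact (HF f Hf)]. }
  { exact (proj1 (proj2 Rxy)). }
  destruct (related_extend Rxy xb' Hbb') as [a' Rxy'].
  assert (FAb' : FA L b') by exact (FA_prec FAbe (Hub be (in_eq be F))).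
  destruct (related_avoid_all Fx Rxy' FAb' HG) as [H [HyH Hcover]].
  destruct (proj2 By (cylinder [a'] H) (@cylinder_open [a'] H))
    as [y' [[Hy'a' Hy'H] [My' _]]].
  { split; [intros l [<-|[]]; exact (related_in_r Rxy')|exact HyH]. }
  assert (Ha'b' : src a' = src b') by exact (eq_sym (proj1 Rxy')).
  assert (Hy'a : y' a') by exact (Hy'a' a' (in_eq a' [])).
  assert (Hx'b' : transport a' b' y' b') by (apply transport_target; assumption).
  pose proof (transport_max_filter My' Hy'a Ha'b') as Mx'.
  exists (transport a' b' y'). split; [|split; [exact Mx'|]].
  - apply HFG. split.
    + intros f Hf. apply (filter_hered (proj1 Mx') Hx'b'), Hub, in_cons, Hf.
    + intros g Hg [mu [Hmu [Hy'mu Hgmu]]].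
      destruct (Hcover g mu Hg (eq_trans (eq_sym Ha'b') Hmu) Hgmu) as [h [Hh Hha]].
      exact (Hy'H h Hh (filter_hered (proj1 My') Hy'mu Hha)).
  - split; [exact (proj1 Mx')|]. exists b'. auto.
Qed.

Lemma shift_iff (x : Mset L) (m : QP) (lam : M) :
  is_filter x -> x lam -> deg L lam = m ->
  forall mu, shift x m mu <-> src lam = rng mu /\ x (cp lam mu).
Proof.
  intros Fx xl dl mu. split.
  - intros [l1 [x1 [d1 [s1 c1]]]].
    rewrite <- (filter_deg_inj Fx x1 xl (eq_trans d1 (eq_sym dl))). auto.
  - intros Hmu. exists lam. auto.
Qed.

Lemma related_of_shift (x y : Mset L) (m n : QP) :
  is_filter x -> is_filter y -> in_dom x m -> in_dom y n ->
  same_set (shift x m) (shift y n) -> exists b a, related x y b a.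
Proof.
  intros Fx Fy [b [xb db]] [a [ya da]] Hss.
  pose proof (shift_iff Fx xb db) as Sx.
  pose proof (shift_iff Fy ya da) as Sy.
  assert (Hba : src b = src a).
  { assert (Hid : shift x m (idm L (src b))).
    { apply Sx. rewrite rng_id, comp_id_r. auto. }
    apply Hss, Sy in Hid. rewrite rng_id in Hid. exact (eq_sym (proj1 Hid)). }
  exists b, a. split; [exact Hba|]. split; [exact xb|].
  intros mu Hmu. split.
  - intros Hx. destruct (proj1 (Sy mu)) as [_ Hy]; [apply Hss, Sx; auto|exact Hy].
  - intros Hy. destruct (proj1 (Sx mu)) as [_ Hx]; [|exact Hx].
    apply Hss, Sy. split; [congruence|exact Hy].
Qed.

Lemma bdry_units_invariant : invariant (@bdry_units QP L).
Proof.
  intros [[x q] y] [Px [Py [m [n [_ [_ [_ [Dx [Dy Hss]]]]]]]]] [z [Bz E]].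
  injection E as -> _. exists x. split; [|reflexivity].
  destruct (related_of_shift (proj1 Px) (proj1 Py) Dx Dy Hss) as [b [a Rxy]].
  exact (bdryX_of_related Px Bz Rxy).
Qed.

Definition traceX (O : Mset L -> Prop) (z : Mset L) : Prop := O z /\ pathX z.

Definition misses_max_paths (O : Mset L -> Prop) : Prop :=
  forall z, O z -> is_max_filter z -> pathX z -> False.

Lemma not_bdryX (x : Mset L) :
  pathX x -> ~ bdryX x -> exists O, open_P O /\ O x /\ misses_max_paths O.
Proof.
  intros Px NB. apply NNPP. intros NO. apply NB. split; [exact Px|].
  intros O HO Ox. apply NNPP. intros NY. apply NO.
  exists O. split; [exact HO|]. split; [exact Ox|].
  intros z Oz Mz Pz. apply NY. exists z. auto.
Qed.

Lemma in_dom_one (x : Mset L) : is_filter x -> in_dom x e.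
Proof.
  intros [[l xl] [Hher _]]. exists (idm L (rng l)). split.
  - exact (Hher l _ xl (prec_idm l)).
  - apply deg_id.
Qed.

Lemma basicG_unit (O : Mset L -> Prop) (x : Mset L) :
  pathX x -> O x -> basicG e e (traceX O) (traceX O) (x, e, x).
Proof.
  intros Px Ox.
  assert (He : e = gmul QP e (ginv QP e)) by (rewrite gmul_Vr; reflexivity).
  assert (Dx : in_dom x e) by exact (in_dom_one (proj1 Px)).
  assert (Sx : same_set (shift x e) (shift x e)) by (intros mu; reflexivity).
  assert (Tx : traceX O x) by exact (conj Ox Px).
  split; [|exact (conj He (conj Tx (conj Tx (conj Dx (conj Dx Sx)))))].
  split; [exact Px|]. split; [exact Px|]. exists e, e.
  exact (conj (Pos_one QP) (conj (Pos_one QP) (conj He (conj Dx (conj Dx Sx))))).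
Qed.

Definition nonbdry_units (g : Triple L) : Prop :=
  exists O, open_P O /\ misses_max_paths O /\ basicG e e (traceX O) (traceX O) g.

Lemma open_X_traceX (O : Mset L -> Prop) : open_P O -> open_X (traceX O).
Proof. intros HO. exists O. split; [exact HO|]. intros z. reflexivity. Qed.

Lemma open_G_nonbdry_units : open_G nonbdry_units.
Proof.
  split.
  - intros [[x q] y] [O [_ [_ [Hg _]]]]. exact Hg.
  - intros g [O [HO [HN Hg]]]. exists e, e, (traceX O), (traceX O).
    split; [apply Pos_one|]. split; [apply Pos_one|].
    split; [exact (open_X_traceX HO)|]. split; [exact (open_X_traceX HO)|].
    split; [exact Hg|]. intros h Hh. exists O. auto.
Qed.

Lemma bdry_units_closed : closed_in_units (@bdry_units QP L).
Proof.
  exists nonbdry_units. split; [exact open_G_nonbdry_units|].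
  intros g [x [Px ->]]. split.
  - intros NB.
    destruct (not_bdryX Px) as [O [HO [Ox HN]]].
    { intros Bx. apply NB. exists x. auto. }
    exists O. split; [exact HO|]. split; [exact HN|]. exact (basicG_unit Px Ox).
  - intros [O [HO [HN [_ [_ [[Ox _] _]]]]]] [z [[_ Bz] E]].
    injection E as <-.
    destruct (Bz O HO Ox) as [y [Oy [My Py]]]. exact (HN y Oy My Py).
Qed.

End PathSpace.

Theorem lemma5p16 (QP : WQLOG) (L : PGraph QP)
  (hFA : exists lam, @FA QP L lam) :
  (forall g, @bdry_units QP L g -> @unitG QP L g)
  /\ @closed_in_units QP L (@bdry_units QP L)
  /\ @invariant QP L (@bdry_units QP L).
Proof.
  split; [|split].
  - intros g [z [[Pz _] ->]]. exists z. auto.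
  - apply bdry_units_closed.
  - apply bdry_units_invariant.
Qed.
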